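(* Let $G$ be a finite group with $Z(G)=I$, and suppose there is an integer $n_0\ge 3$ such that $l^i(D_1,\dots,D_n)\ge1$ for all class vectors $(D_1,\dots,D_n)$ of $G$ of length $n\in\{n_0,n_0+1,\dots,2n_0-1\}$. Then the set of class vectors $(C_1,\dots,C_m)$ of $G$ (of any length $m$) with $l^i(C_1,\dots,C_m)=0$ is finite, and $\lim_{m\to\infty}l^i(C_1,\dots,C_m)=\infty$, i.e. for every sequence of class vectors of $G$ whose lengths $m$ tend to infinity, the values $l^i(C_1,\dots,C_m)$ tend to infinity.
   Context: $I$ is the trivial group and $\iota$ the identity. A class vector of length $k$ is a tuple of $k$ non-trivial conjugacy classes of $G$. $\Sigma^i(C_1,\dots,C_k)$ is the set of $G$-conjugacy classes (simultaneous conjugation) of tuples $(\sigma_1,\dots,\sigma_k)$ with $\sigma_j\in C_j$, $\langle\sigma_1,\dots,\sigma_k\rangle=G$, $\sigma_1\cdots\sigma_k=\iota$, and $l^i(C_1,\dots,C_k)=|\Sigma^i(C_1,\dots,C_k)|$. *)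

From mathcomp Require Import all_boot all_fingroup all_solvable.
Set Implicit Arguments. Unset Strict Implicit. Unset Printing Implicit Defensive.
Local Open Scope group_scope.

Section Defs.
Variable gT : finGroupType.

Definition class_vector (G : {group gT}) (s : seq {set gT}) : bool :=
  all (fun C => (C \in classes G) && (C != [1 gT])) s.

Definition Ei (G : {group gT}) (s : seq {set gT}) : {set {ffun 'I_(size s) -> gT}} :=
  [set sg : {ffun 'I_(size s) -> gT} |
     [&& [forall j, sg j \in nth set0 s j],
         << [set sg j | j : 'I_(size s)] >> == G
       & \prod_(j < size s) sg j == 1]].

Definition tconj k (sg : {ffun 'I_k -> gT}) (g : gT) : {ffun 'I_k -> gT} :=
  [ffun j => sg j ^ g].

Definition Sigma_i (G : {group gT}) (s : seq {set gT}) :=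
  [set [set tconj sg g | g in G] | sg in Ei G s].

Definition l_i (G : {group gT}) (s : seq {set gT}) : nat := #|Sigma_i G s|.

End Defs.

From mathcomp Require Import all_boot all_fingroup all_solvable.
From mathcomp Require Import zify.
Local Open Scope group_scope.

(** Solutions can be glued: if t1 solves s1 and t2 solves s2, then t1 ++ t2^g
    solves s1 ++ s2 for every g in G, and because t2 generates G and
    Z(G) = 1 these |G| tuples are pairwise distinct.  Peeling windows of
    length n0 off the right end, every class vector of length at least n0
    has a solution, and one of length at least (k+1) n0 has at least |G|^k of
    them.  An orbit under simultaneous conjugation has at most |G| elements,
    so l^i is at least |G|^(k-1), which is unbounded since |G| > 1. *)

Set Implicit Arguments. Unset Strict Implicit. Unset Printing Implicit Defensive.

Lemma nth_codom_ord (T : Type) (x0 : T) n (f : 'I_n -> T) (i : 'I_n) :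
  nth x0 (codom f) i = f i.
Proof. by rewrite codomE (nth_map i) ?size_enum_ord // nth_ord_enum. Qed.

Lemma codom_ffun_inj (aT : finType) (rT : Type) :
  injective (fun f : {ffun aT -> rT} => codom f).
Proof. by move=> f g; rewrite !codom_ffun => /val_inj /(can_inj fgraphK). Qed.

Lemma short_seqs_finite (T : finType) n :
  exists L : seq (seq T), forall s, (size s < n)%N -> s \in L.
Proof.
exists (flatten [seq map val (enum {: k.-tuple T}) | k <- iota 0 n]) => s lt_s_n.
apply/flatten_mapP; exists (size s); first by rewrite mem_iota.
by apply/mapP; exists (in_tuple s); rewrite ?mem_enum.
Qed.

Section Solutions.
Variables (gT : finGroupType) (G : {group gT}).
Implicit Types (s : seq {set gT}) (t : seq gT).

Lemma class_vector_split s k : class_vector G s ->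
  class_vector G (take k s) /\ class_vector G (drop k s).
Proof. by rewrite -{1}(cat_take_drop k s) /class_vector all_cat => /andP. Qed.

Lemma class_vector_card_gt1 s : class_vector G s -> (0 < size s)%N -> (1 < #|G|)%N.
Proof.
case: s => // C s /= /andP[/andP[/imsetP[x xG ->] nt_xG] _] _.
rewrite cardG_gt1; apply: contra nt_xG => /eqP G1.
by move: xG; rewrite G1 => /set1gP ->; rewrite class1G.
Qed.

(* The elements of [Ei G s], as lists rather than functions on ['I_(size s)],
   so that they can be concatenated. *)
Definition solution s t : Prop :=
  [/\ size t = size s,
      forall i, (i < size s)%N -> nth 1 t i \in nth set0 s i,
      <<[set x in t]>> = G & \prod_(x <- t) x = 1].

Lemma solution_cat s1 s2 t1 t2 :
  solution s1 t1 -> solution s2 t2 -> solution (s1 ++ s2) (t1 ++ t2).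
Proof.
case=> sz1 mem1 gen1 prod1 [sz2 mem2 gen2 prod2]; split.
- by rewrite !size_cat sz1 sz2.
- move=> i; rewrite size_cat !nth_cat sz1.
  case: (ltnP i (size s1)) => [lt_i _ | le_s1_i lt_i]; first exact: mem1.
  by apply: mem2; rewrite ltn_subLR.
- apply/eqP; rewrite eqEsubset; apply/andP; split.
    rewrite gen_subG; apply/subsetP=> x; rewrite inE mem_cat.
    by case/orP=> x_t; [rewrite -gen1 | rewrite -gen2]; rewrite mem_gen ?inE.
  by rewrite -{1}gen1 genS //; apply/subsetP=> x; rewrite !inE mem_cat => ->.
- by rewrite big_cat /= prod1 prod2 mulg1.
Qed.

Lemma solution_conj s t g : class_vector G s -> g \in G ->
  solution s t -> solution s (map (conjg^~ g) t).
Proof.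
move=> /allP cv_s gG [sz mem gen prod]; split.
- by rewrite size_map.
- move=> i lt_i; rewrite (nth_map 1) ?sz //.
  have /andP[/imsetP[y _ def_C] _] := cv_s _ (mem_nth set0 lt_i).
  have := mem i lt_i; rewrite def_C => /class_eqP <-.
  by rewrite memJ_class.
- have -> : [set x in map (conjg^~ g) t] = [set x in t] :^ g.
    apply/setP=> y; rewrite mem_conjg !inE.
    by rewrite -{1}[y](conjgKV g) (mem_map (conjg_inj g)).
  by rewrite genJ gen conjGid.
- rewrite big_map -(big_morph (conjg^~ g) (fun x y => conjMg x y g) (conj1g g)).
  by rewrite prod conj1g.
Qed.

Lemma conj_seq_inj t : 'Z(G) = 1 -> <<[set x in t]>> = G ->
  {in G &, injective (fun g => map (conjg^~ g) t)}.
Proof.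
move=> Z1 gen g h gG hG /eq_in_map eq_conj; apply/eqP; rewrite eq_mulgV1.
suff: g * h^-1 \in 'Z(G) by rewrite Z1 => /set1gP ->.
rewrite inE groupM ?groupV //= -gen cent_gen; apply/centP=> x; rewrite inE => x_t.
by apply/commute_sym/commgP/conjg_fixP; rewrite conjgM eq_conj // conjgK.
Qed.

Definition ffun_of_seq n t : {ffun 'I_n -> gT} := [ffun i : 'I_n => nth 1 t i].

Lemma codom_ffun_of_seq n t : size t = n -> codom (ffun_of_seq n t) = t.
Proof.
move=> sz_t; apply: (@eq_from_nth _ 1) => [|i]; first by rewrite size_codom card_ord.
rewrite size_codom card_ord => lt_i_n.
by rewrite (nth_codom_ord _ _ (Ordinal lt_i_n)) ffunE.
Qed.

Lemma EiP s (sg : {ffun 'I_(size s) -> gT}) :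
  reflect (solution s (codom sg)) (sg \in Ei G s).
Proof.
have set_sg : [set x in codom sg] = [set sg j | j : 'I_(size s)].
  by apply/setP=> x; rewrite inE; apply/codomP/imsetP => [[j ->] | [j _ ->]]; exists j.
have prod_sg : \prod_(x <- codom sg) x = \prod_(j < size s) sg j.
  rewrite (big_nth 1) size_codom card_ord big_mkord.
  by apply: eq_bigr => j _; rewrite nth_codom_ord.
rewrite inE -set_sg -prod_sg.
apply: (iffP and3P) => [[/forallP mem_sg /eqP gen /eqP prod] | [_ mem_sg gen prod]].
  split=> //; first by rewrite size_codom card_ord.
  by move=> i lt_i; rewrite (nth_codom_ord _ _ (Ordinal lt_i)).
split; [apply/forallP=> j | exact/eqP | exact/eqP].
by have := mem_sg j (ltn_ord j); rewrite nth_codom_ord.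
Qed.

Lemma solution_Ei s t : solution s t -> ffun_of_seq (size s) t \in Ei G s.
Proof. by move=> sol_t; apply/EiP; rewrite codom_ffun_of_seq //; case: sol_t. Qed.

Lemma card_Ei_cat s1 s2 t2 : 'Z(G) = 1 -> class_vector G s2 -> solution s2 t2 ->
  (#|Ei G s1| * #|G| <= #|Ei G (s1 ++ s2)|)%N.
Proof.
move=> Z1 cv_s2 sol_t2; have [sz_t2 _ gen_t2 _] := sol_t2.
pose glue (p : {ffun 'I_(size s1) -> gT} * gT) :=
  codom p.1 ++ map (conjg^~ p.2) t2.
have sz_glue p : size (glue p) = size (s1 ++ s2).
  by rewrite /glue !size_cat size_codom card_ord size_map sz_t2.
rewrite -(cardsX (Ei G s1) G).
rewrite -(card_in_imset (f := ffun_of_seq (size (s1 ++ s2)) \o glue)).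
  apply/subset_leq_card/subsetP=> _ /imsetP[[sg g] /setXP[/EiP sol_sg gG] ->] /=.
  by apply/solution_Ei/solution_cat => //; apply: solution_conj.
move=> [sg g] [sh h] /setXP[_ gG] /setXP[_ hG] eq_glue.
have := congr1 (fun f : {ffun _ -> gT} => codom f) eq_glue.
rewrite /= !codom_ffun_of_seq ?sz_glue // /glue /= => /eqP.
rewrite eqseq_cat ?size_codom // => /andP[/eqP/codom_ffun_inj -> /eqP eq_conj].
by rewrite (conj_seq_inj Z1 gen_t2 gG hG eq_conj).
Qed.

Lemma card_Ei_le_l_i s : (#|Ei G s| <= l_i G s * #|G|)%N.
Proof.
have Ei_cover : Ei G s \subset cover (Sigma_i G s).
  apply/subsetP=> sg Ei_sg; apply/bigcupP; exists [set tconj sg g | g in G].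
    exact: imset_f.
  by apply/imsetP; exists 1 => //; apply/ffunP=> j; rewrite ffunE conjg1.
apply: leq_trans (subset_leq_card Ei_cover) _.
apply: leq_trans (leq_card_cover _) _.
rewrite /l_i -sum1_card big_distrl /=.
by apply: leq_sum => _ /imsetP[sg _ ->]; rewrite mul1n leq_imset_card.
Qed.

Lemma l_i_gt0 s : (0 < l_i G s)%N = (Ei G s != set0).
Proof. by rewrite /l_i card_gt0 imset_eq0. Qed.

End Solutions.

Section LongClassVectors.
Variables (gT : finGroupType) (G : {group gT}) (n0 : nat).
Hypothesis n0_gt0 : (0 < n0)%N.
Hypothesis l_i_window : forall s : seq {set gT}, class_vector G s ->
  (n0 <= size s < 2 * n0)%N -> (0 < l_i G s)%N.

Lemma solution_window s : class_vector G s -> (n0 <= size s < 2 * n0)%N ->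
  exists t, solution G s t.
Proof.
move=> cv_s /(l_i_window cv_s); rewrite l_i_gt0 => /set0Pn[sg /EiP sol_sg].
by exists (codom sg).
Qed.

Lemma solution_last_window s : class_vector G s -> (n0 <= size s)%N ->
  exists t, solution G (drop (size s - n0) s) t.
Proof.
move=> cv_s le_n0_s; have [_ cv_drop] := class_vector_split (size s - n0) cv_s.
by apply: solution_window cv_drop _; rewrite size_drop; apply/andP; split; lia.
Qed.

Lemma solution_exists s : class_vector G s -> (n0 <= size s)%N ->
  exists t, solution G s t.
Proof.
have [m] := ubnP (size s); elim: m s => // m IHm s lt_s_m cv_s le_n0_s.
have [lt_s_2n0 | le_2n0_s] := ltnP (size s) (2 * n0).
  by apply: solution_window; rewrite ?le_n0_s.
have [cv_take _] := class_vector_split (size s - n0) cv_s.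
have [t1 sol_t1] : exists t, solution G (take (size s - n0) s) t.
  by apply: IHm cv_take _; rewrite size_takel ?leq_subr //; lia.
have [t2 sol_t2] := solution_last_window cv_s le_n0_s.
by exists (t1 ++ t2); rewrite -(cat_take_drop (size s - n0) s); apply: solution_cat.
Qed.

Lemma Ei_neq0 s : class_vector G s -> (n0 <= size s)%N -> Ei G s != set0.
Proof.
move=> cv_s le_n0_s; have [t sol_t] := solution_exists cv_s le_n0_s.
by apply/set0Pn; exists (ffun_of_seq (size s) t); apply: solution_Ei.
Qed.

Hypothesis Z1 : 'Z(G) = 1.

Lemma card_Ei_ge k s : class_vector G s -> (k.+1 * n0 <= size s)%N ->
  (#|G| ^ k <= #|Ei G s|)%N.
Proof.
elim: k s => [|k IHk] s cv_s le_s.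
  by rewrite card_gt0 Ei_neq0 // -(mul1n n0).
have le_n0_s : (n0 <= size s)%N by apply: leq_trans le_s; rewrite leq_pmull.
have [cv_take cv_drop] := class_vector_split (size s - n0) cv_s.
have [t2 sol_t2] := solution_last_window cv_s le_n0_s.
rewrite -(cat_take_drop (size s - n0) s).
apply: leq_trans (card_Ei_cat _ Z1 cv_drop sol_t2).
rewrite expnS mulnC leq_mul2r IHk ?orbT // size_takel ?leq_subr //; lia.
Qed.

Lemma l_i_ge k s : class_vector G s -> (k.+2 * n0 <= size s)%N ->
  (#|G| ^ k <= l_i G s)%N.
Proof.
move=> cv_s le_s; rewrite -(@leq_pmul2r #|G|) // -expnSr.
exact: leq_trans (card_Ei_ge cv_s le_s) (card_Ei_le_l_i G s).
Qed.

End LongClassVectors.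

Theorem corollary9 (gT : finGroupType) (G : {group gT}) :
  'Z(G) = 1 ->
  (exists n0 : nat, (3 <= n0)%N /\
     forall s : seq {set gT}, class_vector G s ->
       (n0 <= size s < 2 * n0)%N -> (1 <= l_i G s)%N) ->
  (* the set of class vectors with l^i = 0 is finite *)
  (exists L : seq (seq {set gT}),
     forall s, class_vector G s -> l_i G s = 0%N -> s \in L) /\
  (* l^i tends to infinity along every sequence of class vectors whose
     lengths tend to infinity *)
  (forall v : nat -> seq {set gT},
     (forall k, class_vector G (v k)) ->
     (forall B, exists N, forall k, (N <= k)%N -> (B <= size (v k))%N) ->
     forall B, exists N, forall k, (N <= k)%N -> (B <= l_i G (v k))%N).
Proof.
move=> Z1 [n0 [n0_ge3 l_i_window]]; have n0_gt0 : (0 < n0)%N by lia.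
split.
  have [L short_in_L] := short_seqs_finite {set gT} n0.
  exists L => s cv_s l_i0; apply: short_in_L; rewrite ltnNge; apply/negP => le_n0_s.
  by have := Ei_neq0 n0_gt0 l_i_window cv_s le_n0_s; rewrite -l_i_gt0 l_i0.
move=> v cv_v size_v B.
have [N le_size] := size_v (B.+2 * n0)%N; exists N => k le_N_k.
have G_gt1 : (1 < #|G|)%N.
  by apply: (class_vector_card_gt1 (cv_v k)); apply: leq_trans (le_size k le_N_k); lia.
apply: leq_trans (ltnW (ltn_expl B G_gt1)) _.
exact: l_i_ge n0_gt0 l_i_window Z1 _ _ (cv_v k) (le_size k le_N_k).
Qed.
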